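(* The $\Sigma_1$-theory $\mathcal{T}_\varsigma$ is not smooth with respect to $\{\sigma\}$.
   Context: $\varsigma:\mathbb{N}\to\mathbb{N}$ is the Busy Beaver function: $\varsigma(n)$ is the maximum number of $1$'s that a halting Turing machine with at most $n$ states can leave on its tape, starting from an all-$0$ tape. $\Sigma_1$ is the empty signature (only equality, interpreted as identity) with one sort $\sigma$. Let $\psi_{\ge n}=\exists x_1\dots x_n.\bigwedge_{1\le i<j\le n}\neg(x_i=x_j)$, $\psi_{\le n}=\exists x_1\dots x_n\forall y.\bigvee_{i=1}^n y=x_i$, $\psi_{=n}=\psi_{\ge n}\wedge\psi_{\le n}$. $\mathcal{T}_\varsigma$ is the $\Sigma_1$-theory (class of all $\Sigma_1$-interpretations satisfying the axioms) axiomatized by $\{\psi_{\ge\varsigma(k+2)}\vee\bigvee_{i=2}^{k+2}\psi_{=\varsigma(i)}:k\in\mathbb{N}\}$. A theory $\mathcal{T}$ is smooth w.r.t. $\{\sigma\}$ if for every quantifier-free formula $\phi$, every $\mathcal{T}$-interpretation $\mathcal{A}$ satisfying $\phi$, and every cardinal $\kappa\ge|\sigma^{\mathcal{A}}|$, some $\mathcal{T}$-interpretation $\mathcal{B}$ satisfies $\phi$ with $|\sigma^{\mathcal{B}}|=\kappa$. *)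

From HB Require Import structures.
From mathcomp Require Import all_boot all_order all_algebra.
From Stdlib Require Import ClassicalEpsilon.
Set Implicit Arguments. Unset Strict Implicit. Unset Printing Implicit Defensive.
Import GRing.Theory Num.Theory.

(* Turing machines (2 symbols, bi-infinite tape, blank = false).       *)
(* A machine with m states: states 'I_m, start state 0, halt = None.   *)
(* Each transition writes a symbol, moves left/right (true = right),   *)
(* and goes to a state or halts.                                       *)

Definition tm (m : nat) := 'I_m -> bool -> bool * bool * option 'I_m.

Definition tm_config (m : nat) := (option 'I_m * (int -> bool) * int)%type.

Definition tm_start (m : nat) : tm_config m :=
  (match m as m0 return option 'I_m0 with
   | 0 => None
   | m'.+1 => Some ord0
   end, (fun _ => false), 0%R).

Definition tm_step (m : nat) (M : tm m) (c : tm_config m) : tm_config m :=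
  let: (q, tape, pos) := c in
  match q with
  | None => c
  | Some s =>
      let: (w, mvr, q') := M s (tape pos) in
      (q', (fun z => if z == pos then w else tape z),
       if mvr then (pos + 1)%R else (pos - 1)%R)
  end.

Definition tm_run (m : nat) (M : tm m) (t : nat) : tm_config m :=
  iter t (tm_step M) (tm_start m).

Definition tape_ones (tape : int -> bool) (k : nat) : Prop :=
  exists s : seq int, [/\ uniq s, (forall z, (z \in s) = tape z) & size s = k].

Definition halts_with (m : nat) (M : tm m) (k : nat) : Prop :=
  exists t tape pos, tm_run M t = (None, tape, pos) /\ tape_ones tape k.

Definition is_bb_value (n k : nat) : Prop :=
  (exists m (M : tm m), m <= n /\ halts_with M k) /\
  (forall m (M : tm m) k', m <= n -> halts_with M k' -> k' <= k).

Definition busy_beaver (n : nat) : nat :=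
  epsilon (inhabits 0%N) (is_bb_value n).

(* First-order logic over the empty signature Sigma_1 (one sort sigma, *)
(* only equality), variables indexed by nat.                            *)

Inductive form : Type :=
  | FTrue | FFalse
  | FEq (x y : nat)
  | FNot (f : form)
  | FAnd (f g : form)
  | FOr (f g : form)
  | FEx (x : nat) (f : form)
  | FAll (x : nat) (f : form).

Fixpoint qfree (f : form) : Prop :=
  match f with
  | FTrue | FFalse | FEq _ _ => True
  | FNot g => qfree g
  | FAnd g h | FOr g h => qfree g /\ qfree h
  | FEx _ _ | FAll _ _ => False
  end.

Record interp : Type := Interp { dom : Type; val : nat -> dom }.

Definition upd (D : Type) (v : nat -> D) (x : nat) (d : D) : nat -> D :=
  fun y => if y == x then d else v y.

Fixpoint holds (D : Type) (v : nat -> D) (f : form) : Prop :=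
  match f with
  | FTrue => True
  | FFalse => False
  | FEq x y => v x = v y
  | FNot g => ~ holds v g
  | FAnd g h => holds v g /\ holds v h
  | FOr g h => holds v g \/ holds v h
  | FEx x g => exists d : D, holds (upd v x d) g
  | FAll x g => forall d : D, holds (upd v x d) g
  end.

Definition sat (A : interp) (f : form) : Prop := holds (val A) f.

Definition big_and (fs : seq form) : form := foldr FAnd FTrue fs.
Definition big_or (fs : seq form) : form := foldr FOr FFalse fs.
Definition exs (xs : seq nat) (f : form) : form := foldr FEx f xs.

Definition psi_ge (n : nat) : form :=
  exs (iota 1 n)
    (big_and [seq FNot (FEq i j) | i <- iota 1 n, j <- [seq j <- iota 1 n | i < j]]).

Definition psi_le (n : nat) : form :=
  exs (iota 1 n) (FAll 0 (big_or [seq FEq 0 i | i <- iota 1 n])).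

Definition psi_eq (n : nat) : form := FAnd (psi_ge n) (psi_le n).

Definition T_bb_axiom (k : nat) : form :=
  FOr (psi_ge (busy_beaver (k + 2)))
      (big_or [seq psi_eq (busy_beaver i) | i <- iota 2 (k + 1)]).

Definition theory := interp -> Prop.

Definition T_bb : theory := fun A => forall k, sat A (T_bb_axiom k).

(* Cardinals are represented by types; |A| <= kappa means an injection,
   |B| = kappa means a bijection. *)
Definition smooth (T : theory) : Prop :=
  forall (phi : form), qfree phi ->
  forall A : interp, T A -> sat A phi ->
  forall kappa : Type, (exists f : dom A -> kappa, injective f) ->
  exists B : interp, [/\ T B, sat B phi & exists g : dom B -> kappa, bijective g].

(* If busy_beaver jumps at some i >= 2, i.e. busy_beaver i + 1 < busy_beaver (i + 1), then
   a model of size busy_beaver i satisfies every axiom, whereas no structure of size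
   busy_beaver i + 1 satisfies the axiom for k = i - 1; smoothness applied to the formula
   True rules this out.  Such a jump exists: otherwise busy_beaver would grow with slope at
   most 1 from 2 on, but chaining j copies of a six-state gadget that turns a block of a ones
   into a block of 2a ones gives a machine with 6j + 1 states leaving 2^j ones. *)

From Pilot Require Import Defs.
From mathcomp Require Import all_boot ssralg ssrnum ssrint zify.
From Stdlib Require Import FunctionalExtensionality ClassicalEpsilon Classical.
Import GRing.Theory.
Set Implicit Arguments. Unset Strict Implicit. Unset Printing Implicit Defensive.

Definition tape_write (tape : int -> bool) (pos : int) (w : bool) : int -> bool :=
  fun z => if z == pos then w else tape z.

Definition head_move (pos : int) (right : bool) : int :=
  if right then (pos + 1)%R else (pos - 1)%R.

Section Reachability.
Variables (m : nat) (M : tm m).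

Definition reaches (c c' : tm_config m) : Prop := exists t, iter t (tm_step M) c = c'.

Lemma reaches_refl c : reaches c c.
Proof. by exists 0. Qed.

Lemma reaches_trans c1 c2 c3 : reaches c1 c2 -> reaches c2 c3 -> reaches c1 c3.
Proof. by move=> [t1 <-] [t2 <-]; exists (t2 + t1); rewrite iterD. Qed.

Lemma reaches_step s tape pos b w d q : tape pos = b -> M s b = (w, d, q) ->
  reaches (Some s, tape, pos) (q, tape_write tape pos w, head_move pos d).
Proof. by move=> <- Ms; exists 1; rewrite /= Ms. Qed.

Lemma reaches_step_keep s tape pos b d q : tape pos = b -> M s b = (b, d, q) ->
  reaches (Some s, tape, pos) (q, tape, head_move pos d).
Proof.
move=> tape_pos Ms; have := reaches_step tape_pos Ms.
suff -> : tape_write tape pos b = tape by [].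
by apply: functional_extensionality => z; rewrite /tape_write; case: eqP => [->|].
Qed.

Lemma sweep_right s : M s true = (true, true, Some s) ->
  forall l p (tape : int -> bool), (forall i, i < l -> tape (p + i%:Z)%R) ->
  reaches (Some s, tape, p) (Some s, tape, (p + l%:Z)%R).
Proof.
move=> Ms; elim=> [|l IH] p tape ones; first by rewrite addr0; apply: reaches_refl.
have tape_p : tape p = true by have := ones 0 isT; rewrite addr0.
apply: reaches_trans (reaches_step_keep tape_p Ms) _.
rewrite (_ : (p + l.+1%:Z = (p + 1) + l%:Z)%R); last by lia.
by apply: IH => i lt_il; rewrite (_ : (p + 1 + i%:Z = p + i.+1%:Z)%R) ?ones //; lia.
Qed.

Lemma sweep_left s : M s true = (true, false, Some s) ->
  forall l p (tape : int -> bool), (forall i, i < l -> tape (p - i%:Z)%R) ->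
  reaches (Some s, tape, p) (Some s, tape, (p - l%:Z)%R).
Proof.
move=> Ms; elim=> [|l IH] p tape ones; first by rewrite subr0; apply: reaches_refl.
have tape_p : tape p = true by have := ones 0 isT; rewrite subr0.
apply: reaches_trans (reaches_step_keep tape_p Ms) _.
rewrite (_ : (p - l.+1%:Z = (p - 1) - l%:Z)%R); last by lia.
by apply: IH => i lt_il; rewrite (_ : (p - 1 - i%:Z = p - i.+1%:Z)%R) ?ones //; lia.
Qed.

End Reachability.

Definition blocks (p : int) (a q : nat) (z : int) : bool :=
  ((p <= z)%R && (z < p + a%:Z)%R)
  || ((p + a%:Z + 1 <= z)%R && (z < p + a%:Z + 1 + q%:Z)%R).

Lemma blocks_shift (p : int) a : blocks p 0 a = blocks (p + 1)%R a 0.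
Proof. by apply: functional_extensionality => z; rewrite /blocks; lia. Qed.

Lemma blocks_erase (p : int) a q : tape_write (blocks p a.+1 q) p false = blocks (p + 1)%R a q.
Proof.
by apply: functional_extensionality => z; rewrite /tape_write /blocks; case: eqP; lia.
Qed.

Lemma blocks_append2 (p z : int) a q : z = (p + a%:Z + 1 + q%:Z)%R ->
  tape_write (tape_write (blocks p a q) z true) (z + 1)%R true = blocks p a q.+2.
Proof.
move=> ->; apply: functional_extensionality => y; rewrite /tape_write /blocks.
by case: eqP => [->|ne1]; last case: eqP; lia.
Qed.

(* E erases the leftmost one, R1 and R2 run right across the two blocks, R2 and W append
   two ones, L2 and L1 run back to the left end. *)
Section DoublingGadget.
Variables (m : nat) (M : tm m) (E R1 R2 W L2 L1 : 'I_m).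
Hypotheses (E_one : M E true = (false, true, Some R1))
  (R1_one : M R1 true = (true, true, Some R1))
  (R1_zero : M R1 false = (false, true, Some R2))
  (R2_one : M R2 true = (true, true, Some R2))
  (R2_zero : M R2 false = (true, true, Some W))
  (W_zero : M W false = (true, false, Some L2))
  (L2_one : M L2 true = (true, false, Some L2))
  (L2_zero : M L2 false = (false, false, Some L1))
  (L1_one : M L1 true = (true, false, Some L1))
  (L1_zero : M L1 false = (false, true, Some E)).

Lemma gadget_forth (p : int) a q :
  reaches M (Some E, blocks p a.+1 q, p)
    (Some L2, blocks (p + 1)%R a q.+2, (p + 1 + a%:Z + q.+1%:Z)%R).
Proof.
have one_p : blocks p a.+1 q p by rewrite /blocks; lia.
apply: reaches_trans (reaches_step one_p E_one) _; rewrite blocks_erase /head_move.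
apply: reaches_trans (sweep_right R1_one (l := a) _) _.
  by move=> i lt_i; rewrite /blocks; lia.
have gap : blocks (p + 1) a q (p + 1 + a%:Z)%R = false by rewrite /blocks; lia.
apply: reaches_trans (reaches_step_keep gap R1_zero) _; rewrite /head_move.
apply: reaches_trans (sweep_right R2_one (l := q) _) _.
  by move=> i lt_i; rewrite /blocks; lia.
pose z := (p + 1 + a%:Z + 1 + q%:Z)%R.
have end2 : blocks (p + 1) a q z = false by rewrite /z /blocks; lia.
apply: reaches_trans (reaches_step end2 R2_zero) _.
have next : tape_write (blocks (p + 1) a q) z true (z + 1)%R = false.
  by rewrite /tape_write /z /blocks; case: eqP; lia.
apply: reaches_trans (reaches_step next W_zero) _.
rewrite blocks_append2 // /head_move.
rewrite (_ : (z + 1 - 1 = p + 1 + a%:Z + q.+1%:Z)%R); first exact: reaches_refl.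
by rewrite /z; lia.
Qed.

Lemma gadget_back (p : int) a q Q : q <= Q ->
  reaches M (Some L2, blocks p a Q, (p + a%:Z + q%:Z)%R) (Some E, blocks p a Q, p).
Proof.
move=> le_qQ.
apply: reaches_trans (sweep_left L2_one (l := q) _) _.
  by move=> i lt_i; rewrite /blocks; lia.
have gap : blocks p a Q (p + a%:Z + q%:Z - q%:Z)%R = false by rewrite /blocks; lia.
apply: reaches_trans (reaches_step_keep gap L2_zero) _; rewrite /head_move.
apply: reaches_trans (sweep_left L1_one (l := a) _) _.
  by move=> i lt_i; rewrite /blocks; lia.
have before : blocks p a Q (p + a%:Z + q%:Z - q%:Z - 1 - a%:Z)%R = false.
  by rewrite /blocks; lia.
apply: reaches_trans (reaches_step_keep before L1_zero) _; rewrite /head_move.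
by rewrite (_ : (p + a%:Z + q%:Z - q%:Z - 1 - a%:Z + 1 = p)%R); [apply: reaches_refl | lia].
Qed.

Lemma gadget_round (p : int) a q :
  reaches M (Some E, blocks p a.+1 q, p) (Some E, blocks (p + 1)%R a q.+2, (p + 1)%R).
Proof. exact: reaches_trans (gadget_forth p a q) (gadget_back _ _ (leqnSn q.+1)). Qed.

Lemma gadget_rounds a (p : int) q :
  reaches M (Some E, blocks p a q, p)
    (Some E, blocks (p + a%:Z)%R 0 (q + 2 * a), (p + a%:Z)%R).
Proof.
elim: a p q => [|a IH] p q; first by rewrite addr0 muln0 addn0; apply: reaches_refl.
apply: reaches_trans (gadget_round p a q) _.
have -> : (p + a.+1%:Z = p + 1 + a%:Z)%R by lia.
have -> : q + 2 * a.+1 = q.+2 + 2 * a by lia.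
exact: IH.
Qed.

End DoublingGadget.

(* State 0 writes the first one; gadget i occupies states 6i + 1 .. 6i + 6, and its state E
   passes control to gadget i + 1 or, for the last gadget, halts. *)
Definition gadget_next (j i r : nat) (b : bool) : bool * bool * option nat :=
  let state i r := Some (i * 6 + r).+1 in
  match r, b with
  | 0, true => (false, true, state i 1)
  | 0, false => (false, true, if i.+1 < j then state i.+1 0 else None)
  | 1, true => (true, true, state i 1)
  | 1, false => (false, true, state i 2)
  | 2, true => (true, true, state i 2)
  | 2, false => (true, true, state i 3)
  | 3, _ => (true, false, state i 4)
  | 4, true => (true, false, state i 4)
  | 4, false => (false, false, state i 5)
  | _, true => (true, false, state i 5)
  | _, false => (false, true, state i 0)
  end.

Definition doubler (j : nat) : tm (6 * j).+1 := fun s b =>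
  let: (w, d, q) :=
    if s : nat is s'.+1 then gadget_next j (s' %/ 6) (s' %% 6) b
    else (true, false, Some 6) in
  (w, d, omap inord q).
Arguments doubler : clear implicits.

Definition gadget_state (j i r : nat) : 'I_(6 * j).+1 := inord (i * 6 + r).+1.

Lemma doubler_gadget_state j i r b : i < j -> r < 6 ->
  doubler j (gadget_state j i r) b =
  let: (w, d, q) := gadget_next j i r b in (w, d, omap inord q).
Proof.
move=> lt_ij lt_r6; rewrite /doubler /gadget_state inordK; last by lia.
by rewrite modnMDl modn_small // divnMDl // divn_small // addn0.
Qed.

Section DoublerGadget.
Variables (j i : nat).
Hypothesis lt_ij : i < j.

Lemma doubler_rounds a (p : int) q :
  reaches (doubler j) (Some (gadget_state j i 0), blocks p a q, p)
    (Some (gadget_state j i 0), blocks (p + a%:Z)%R 0 (q + 2 * a), (p + a%:Z)%R).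
Proof.
pose st := gadget_state j i.
by apply: (gadget_rounds (R1 := st 1) (R2 := st 2) (W := st 3) (L2 := st 4) (L1 := st 5));
  rewrite doubler_gadget_state.
Qed.

Lemma doubler_exit :
  doubler j (gadget_state j i 0) false =
  (false, true, if i.+1 < j then Some (gadget_state j i.+1 0) else None).
Proof. by rewrite doubler_gadget_state //=; case: ifP. Qed.

Lemma doubler_pass a (p : int) :
  reaches (doubler j) (Some (gadget_state j i 0), blocks p a 0, p)
    (if i.+1 < j then Some (gadget_state j i.+1 0) else None,
     blocks (p + a%:Z + 1)%R (2 * a) 0, (p + a%:Z + 1)%R).
Proof.
apply: reaches_trans (doubler_rounds a p 0) _.
have empty : blocks (p + a%:Z) 0 (0 + 2 * a) (p + a%:Z)%R = false by rewrite /blocks; lia.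
by rewrite -blocks_shift; apply: reaches_step_keep empty doubler_exit.
Qed.
End DoublerGadget.

Lemma doubler_halts_from j d : forall i (p : int) a, i + d.+1 = j ->
  exists p' : int, reaches (doubler j) (Some (gadget_state j i 0), blocks p a 0, p)
                              (None, blocks p' 0 (a * 2 ^ d.+1), (p' + 1)%R).
Proof.
elim: d => [|d IH] i p a def_j; have lt_ij : i < j by lia.
  exists (p + a%:Z)%R; move: (doubler_pass lt_ij a p); rewrite ifN; last by lia.
  by rewrite blocks_shift expn1 [a * 2]mulnC.
have def_j' : i.+1 + d.+1 = j by rewrite addSnnS.
have [p' pass] := IH i.+1 (p + a%:Z + 1)%R (2 * a) def_j'.
exists p'; apply: reaches_trans (doubler_pass lt_ij a p) _.
rewrite ifT; last by lia.
by rewrite expnS mulnA [a * 2]mulnC.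
Qed.

Lemma doubler_start j : 0 < j ->
  reaches (doubler j) (tm_start (6 * j).+1) (Some (gadget_state j 0 0), blocks 0 1 0, 0%R).
Proof.
move=> j_gt0.
have start : doubler j ord0 false = (true, false, Some (gadget_state j 0 5)) by [].
rewrite /tm_start; apply: reaches_trans (reaches_step (erefl false) start) _.
have back : doubler j (gadget_state j 0 5) false = (false, true, Some (gadget_state j 0 0)).
  by rewrite doubler_gadget_state.
have blank : tape_write (fun=> false) 0 true (head_move 0 false) = false by [].
apply: reaches_trans (reaches_step_keep blank back) _.
have -> : tape_write (fun=> false) 0 true = blocks 0 1 0.
  by apply: functional_extensionality => z; rewrite /tape_write /blocks; case: eqP; lia.
exact: reaches_refl.
Qed.

Lemma tape_ones_blocks (p : int) q : tape_ones (blocks p 0 q) q.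
Proof.
exists [seq (p + 1 + k%:Z)%R | k <- iota 0 q]; split.
- by rewrite map_inj_uniq ?iota_uniq // => x y; lia.
- move=> z; apply/mapP/idP => [[k] | ones_z].
    by rewrite mem_iota /blocks => k_lt ->; lia.
  by exists (absz (z - p - 1)%R); rewrite ?mem_iota; move: ones_z; rewrite /blocks; lia.
- by rewrite size_map size_iota.
Qed.

Lemma halts_with_doubler j : 0 < j -> halts_with (doubler j) (2 ^ j).
Proof.
move=> j_gt0; have [p' run] := @doubler_halts_from j j.-1 0 0%R 1 (prednK j_gt0).
have [t run_t] := reaches_trans (doubler_start j_gt0) run.
exists t, (blocks p' 0 (1 * 2 ^ j.-1.+1)), (p' + 1)%R; split; first exact: run_t.
by rewrite mul1n prednK //; apply: tape_ones_blocks.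
Qed.

Lemma iter_tm_step_halted m (M : tm m) n tape pos :
  iter n (tm_step M) (None, tape, pos) = (None, tape, pos).
Proof. by elim: n => //= n ->. Qed.

Lemma tape_ones_unique tape k k' : tape_ones tape k -> tape_ones tape k' -> k = k'.
Proof.
move=> [s [s_uniq s_tape <-]] [s' [s'_uniq s'_tape <-]].
by apply/perm_size/uniq_perm => // z; rewrite s_tape s'_tape.
Qed.

Lemma halts_with_unique m (M : tm m) k k' : halts_with M k -> halts_with M k' -> k = k'.
Proof.
move=> [t [tape [pos [run ones]]]] [t' [tape' [pos' [run' ones']]]].
wlog le_tt' : t t' tape tape' pos pos' k k' run ones run' ones' / t <= t'.
  move=> wlog_le; case: (leqP t t') => [|/ltnW] le; first exact: (wlog_le t t' tape tape' pos pos').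
  by apply/esym/(wlog_le t' t tape' tape pos' pos).
move: run'; rewrite /tm_run -(subnK le_tt') iterD -/(tm_run M t) run iter_tm_step_halted.
by case=> tape_eq _; rewrite tape_eq in ones; apply: tape_ones_unique ones ones'.
Qed.

Definition halting_count m (M : tm m) : nat := epsilon (inhabits 0) (halts_with M).

Lemma halting_countE m (M : tm m) k : halts_with M k -> halting_count M = k.
Proof.
move=> halts; apply/esym/(halts_with_unique halts).
by apply: epsilon_spec; exists k.
Qed.

Definition halting_bound (n : nat) : nat :=
  \max_(m < n.+1) \max_(f : {ffun 'I_m * bool -> bool * bool * option 'I_m})
     halting_count (fun s b => f (s, b)).

Lemma halts_with_le_bound n m (M : tm m) k :
  m <= n -> halts_with M k -> k <= halting_bound n.
Proof.
move=> le_mn; pose f := [ffun sb : 'I_m * bool => M sb.1 sb.2].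
have -> : M = fun s b => f (s, b).
  by apply: functional_extensionality => s; apply: functional_extensionality => b; rewrite ffunE.
move=> /halting_countE <-.
apply: leq_trans (leq_bigmax (Ordinal (le_mn : m < n.+1))).
exact: (leq_bigmax (F := fun f : {ffun 'I_m * bool -> _} => halting_count (fun s b => f (s, b)))).
Qed.

Lemma busy_beaver_spec n : is_bb_value n (busy_beaver n).
Proof.
apply: epsilon_spec.
pose attained k := exists m (M : tm m), m <= n /\ halts_with M k.
pose attainedb k := if excluded_middle_informative (attained k) then true else false.
have attainedP k : reflect (attained k) (attainedb k).
  by rewrite /attainedb; case: excluded_middle_informative => ?; constructor.
have attained0 : exists k, attainedb k.
  exists 0; apply/attainedP; exists 0, (fun _ _ => (false, false, None)); split => //.
  by exists 0, (fun=> false), 0%R; split => //; exists [::].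
have attained_le k : attainedb k -> k <= halting_bound n.
  by move=> /attainedP [m [M [le_mn halts]]]; apply: halts_with_le_bound halts.
case: (ex_maxnP attained0 attained_le) => k /attainedP att_k max_k.
exists k; split => // m M k' le_mn halts; apply: max_k; apply/attainedP.
by exists m, M.
Qed.

Lemma halts_with_le_busy_beaver n m (M : tm m) k :
  m <= n -> halts_with M k -> k <= busy_beaver n.
Proof. by move=> le_mn halts; apply: (busy_beaver_spec n).2 halts. Qed.

Lemma busy_beaver_mono : {homo busy_beaver : n n' / n <= n'}.
Proof.
move=> n n' le_nn'; have [[m [M [le_mn halts]]] _] := busy_beaver_spec n.
exact: halts_with_le_busy_beaver (leq_trans le_mn le_nn') halts.
Qed.

Lemma busy_beaver_gt0 n : 0 < n -> 0 < busy_beaver n.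
Proof.
move=> n_gt0; apply: (@halts_with_le_busy_beaver n 1 (fun _ _ => (true, true, None))) => //.
exists 1, (tape_write (fun=> false) 0 true), 1%R; split => //.
by exists [:: 0%R]; split => // z; rewrite inE /tape_write.
Qed.

Lemma exp2_le_busy_beaver j : 0 < j -> 2 ^ j <= busy_beaver (6 * j).+1.
Proof. by move=> j_gt0; apply: halts_with_le_busy_beaver (halts_with_doubler j_gt0). Qed.

Lemma busy_beaver_jump : exists2 i, 2 <= i & (busy_beaver i).+1 < busy_beaver i.+1.
Proof.
apply: NNPP => no_jump.
have linear d : busy_beaver (d + 2) <= busy_beaver 2 + d.
  elim: d => [|d IH]; first by rewrite addn0.
  rewrite leqNgt; apply/negP => jump; apply: no_jump; exists (d + 2); first exact: leq_addl.
  by rewrite -addSn; lia.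
have exp_large d : 7 * (d + 6) < 2 ^ (d + 6).
  by elim: d => [|d IH] //; rewrite addSn expnS; lia.
pose j := busy_beaver 2 + 6.
have j_gt0 : 0 < j by rewrite addn_gt0 orbT.
have := exp2_le_busy_beaver j_gt0; have := linear (6 * j).-1.
rewrite (_ : (6 * j).-1 + 2 = (6 * j).+1); last by lia.
by have := exp_large (busy_beaver 2); rewrite -/j; lia.
Qed.

Lemma holds_exs D (v : nat -> D) xs f :
  holds v (exs xs f) <-> exists w, (forall y : nat, y \notin xs -> w y = v y) /\ holds w f.
Proof.
elim: xs v => [|x xs IH] v /=.
  split=> [holds_f | [w [w_v holds_f]]]; first by exists v.
  by have -> : v = w by apply: functional_extensionality => y; rewrite w_v.
split=> [[d /IH [w [w_v holds_f]]] | [w [w_v holds_f]]].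
  exists w; split=> // y; rewrite inE negb_or => /andP [y_x y_xs].
  by rewrite w_v // /upd (negbTE y_x).
exists (w x); apply/IH; exists w; split=> // y y_xs; rewrite /upd.
by case: eqP => [-> | /eqP y_x] //; apply: w_v; rewrite inE negb_or y_x.
Qed.

Lemma holds_big_and_cat D (v : nat -> D) fs gs :
  holds v (big_and (fs ++ gs)) <-> holds v (big_and fs) /\ holds v (big_and gs).
Proof. by elim: fs => [|f fs IH] /=; [tauto | rewrite IH; tauto]. Qed.

Lemma holds_big_and_map D (v : nat -> D) (F : nat -> form) s :
  holds v (big_and (map F s)) <-> forall x : nat, x \in s -> holds v (F x).
Proof.
elim: s => [|x s IH] //=; rewrite IH; split=> [[Fx Fs] y | Fs].
  by rewrite inE => /predU1P [-> | /Fs].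
by split=> [|y s_y]; apply: Fs; rewrite inE ?eqxx ?s_y ?orbT.
Qed.

Lemma holds_big_and_allpairs D (v : nat -> D) (F : nat -> nat -> form) s t :
  holds v (big_and [seq F x y | x <- s, y <- t x]) <->
  forall x y : nat, x \in s -> y \in t x -> holds v (F x y).
Proof.
elim: s => [|x s IH] //=; rewrite holds_big_and_cat holds_big_and_map IH.
split=> [[Fx Fs] x' y | Fs].
  by rewrite inE => /predU1P [-> | /Fs]; [apply: Fx | apply].
by split=> [y | x' y s_x']; apply: Fs; rewrite inE ?eqxx ?s_x' ?orbT.
Qed.

Lemma holds_big_or_map D (v : nat -> D) (F : nat -> form) s :
  holds v (big_or (map F s)) <-> exists2 x : nat, x \in s & holds v (F x).
Proof.
elim: s => [|x s IH] /=; first by split=> // -[].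
rewrite IH; split=> [[Fx | [y s_y Fy]] | [y]]; first by exists x; rewrite ?inE ?eqxx.
  by exists y; rewrite // inE s_y orbT.
by rewrite inE => /predU1P [-> | s_y] Fy; [left | right; exists y].
Qed.

Lemma comp_upd D D' (g : D -> D') (v : nat -> D) x d :
  g \o upd v x d = upd (g \o v) x (g d).
Proof. by apply: functional_extensionality => y; rewrite /upd /=; case: eqP. Qed.

Lemma holds_bij D D' (g : D -> D') :
  bijective g -> forall (v : nat -> D) f, holds v f <-> holds (g \o v) f.
Proof.
move=> [g' gK g'K] v f.
elim: f v => //= [x y | f IH | f IHf h IHh | f IHf h IHh | x f IH | x f IH] v.
- by split=> [-> | /(can_inj gK)].
- by rewrite IH.
- by rewrite IHf IHh.
- by rewrite IHf IHh.
- split=> [[d] | [d']]; first by rewrite IH comp_upd; exists (g d).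
  by exists (g' d'); rewrite IH comp_upd g'K.
- split=> [all_d d' | all_d d]; first by rewrite -(g'K d') -comp_upd -IH.
  by rewrite IH comp_upd.
Qed.

Section FiniteModels.
Variables (D : finType) (v : nat -> D).

Definition enum_valuation n (y : nat) : D :=
  if y \in iota 1 n then nth (v 0) (enum D) y.-1 else v y.

Lemma enum_valuation_out n (y : nat) : y \notin iota 1 n -> enum_valuation n y = v y.
Proof. by rewrite /enum_valuation => /negbTE ->. Qed.

Lemma enum_valuation_in n (y : nat) :
  y \in iota 1 n -> enum_valuation n y = nth (v 0) (enum D) y.-1.
Proof. by rewrite /enum_valuation => ->. Qed.

Lemma holds_psi_ge n : holds v (psi_ge n) <-> n <= #|D|.
Proof.
rewrite /psi_ge holds_exs; split=> [[w [_ /holds_big_and_allpairs distinct]] | le_nD].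
  have w_inj : {in iota 1 n &, injective w}.
    move=> x y x_in y_in wxy; case: (ltngtP x y) => // lt_xy.
      by case: (distinct x y) => //; rewrite mem_filter lt_xy.
    by case: (distinct y x) => //; rewrite mem_filter lt_xy.
  have := @uniq_leq_size _ (map w (iota 1 n)) (enum D).
  rewrite size_map size_iota -cardE map_inj_in_uniq ?iota_uniq //.
  by apply=> // d _; rewrite mem_enum.
exists (enum_valuation n); split; first exact: enum_valuation_out.
apply/holds_big_and_allpairs => x y; rewrite mem_filter !mem_iota => x_in /andP [lt_xy y_in].
have lt_x1y1 : x.-1 < y.-1 by lia.
have lt_y1D : y.-1 < size (enum D) by rewrite -cardE (leq_trans _ le_nD) //; lia.
rewrite /= !enum_valuation_in ?mem_iota ?x_in ?y_in // => /eqP.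
by rewrite nth_uniq ?enum_uniq ?(ltn_trans lt_x1y1 lt_y1D) // (ltn_eqF lt_x1y1).
Qed.

Lemma holds_psi_le n : holds v (psi_le n) <-> #|D| <= n.
Proof.
rewrite /psi_le holds_exs; split=> [[w [_ /= covers]] | le_Dn].
  rewrite cardE -(size_iota 1 n) -(size_map w); apply: uniq_leq_size (enum_uniq _) _ => d _.
  have /holds_big_or_map [x] := covers d; rewrite mem_iota /upd /= => x_in.
  by case: eqP => [x0 | _ ->]; [move: x_in; rewrite x0 | apply: map_f; rewrite mem_iota].
exists (enum_valuation n); split=> [|d]; first exact: enum_valuation_out.
have idx_lt : index d (enum D) < n by rewrite (leq_trans _ le_Dn) // cardE index_mem mem_enum.
have idx_in : (index d (enum D)).+1 \in iota 1 n by rewrite mem_iota.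
apply/holds_big_or_map; exists (index d (enum D)).+1 => //.
by rewrite /= /upd /= enum_valuation_in // nth_index ?mem_enum.
Qed.

Lemma holds_psi_eq n : holds v (psi_eq n) <-> #|D| = n.
Proof.
rewrite /= holds_psi_ge holds_psi_le.
by split=> [[le_nD le_Dn] | ->]; [apply/eqP; rewrite eqn_leq le_nD le_Dn | ].
Qed.

Lemma holds_T_bb_axiom k :
  holds v (T_bb_axiom k) <->
  busy_beaver (k + 2) <= #|D| \/ exists2 l, 2 <= l <= k + 2 & #|D| = busy_beaver l.
Proof.
rewrite /T_bb_axiom /= holds_psi_ge holds_big_or_map.
split=> -[le_bbD | [l]]; try by left.
  by rewrite mem_iota holds_psi_eq => l_in card_D; right; exists l => //; lia.
by move=> l_in card_D; right; exists l; rewrite ?mem_iota ?holds_psi_eq //; lia.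
Qed.

Lemma T_bb_card_busy_beaver i : 2 <= i -> #|D| = busy_beaver i -> T_bb (Interp v).
Proof.
move=> i_ge2 card_D k; apply/holds_T_bb_axiom.
case: (leqP (k + 2) i) => [le_k2i | lt_ik2]; last by right; exists i => //; lia.
by left; rewrite card_D; apply: busy_beaver_mono.
Qed.

Lemma not_T_bb_card_jump i : 0 < i -> (busy_beaver i).+1 < busy_beaver i.+1 ->
  #|D| = (busy_beaver i).+1 -> ~ T_bb (Interp v).
Proof.
move=> i_gt0 jump card_D /(_ (i - 1)) /holds_T_bb_axiom.
rewrite (_ : i - 1 + 2 = i.+1); last by lia.
rewrite card_D => -[le_jump | [l /andP [_ le_l] card_l]]; first by lia.
case: (ltnP l i.+1) => [le_li | ge_l]; first by have := busy_beaver_mono (le_li : l <= i); lia.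
have eq_l : l = i.+1 by lia.
by rewrite eq_l in card_l; lia.
Qed.

End FiniteModels.

Theorem lemma50 : ~ smooth T_bb.
Proof.
move=> smooth_T_bb; have [i i_ge2 jump] := busy_beaver_jump.
have bb_gt0 : 0 < busy_beaver i by apply: busy_beaver_gt0; lia.
pose A := Interp (fun=> Ordinal bb_gt0).
have T_A : T_bb A by apply: T_bb_card_busy_beaver i_ge2 _; rewrite card_ord.
have widen_inj : injective (widen_ord (leqnSn (busy_beaver i))).
  by move=> x y [eq_xy]; apply: val_inj.
have [B [T_B _ [g g_bij]]] := smooth_T_bb FTrue I A T_A I _ (ex_intro _ _ widen_inj).
apply: (not_T_bb_card_jump (v := g \o Defs.val B) (ltnW i_ge2) jump); first by rewrite card_ord.
by move=> k; apply/(holds_bij g_bij)/T_B.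
Qed.
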